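(* Let $T=T_\lambda$ ($\lambda\in(1,2)$) be a tent map whose critical point $c$ has period $m\ge 3$, and let $K$ be its kneading sequence. (1) If for some $N\in\mathbb N$ a word $\mathbf s\in\{0,1\}^N$ is not the initial $N$-segment of $\mathcal I(x)$ for any $x\in[0,T(c)]$, then there is a segment (block of consecutive symbols) $\mathbf r$ of $\mathbf s$ with length $j\le m$ such that $\mathbf r\succ K|_j$. (2) If $\mathbf t\in\{0,1\}^{\mathbb N}$ satisfies $\sigma^k(\mathbf t)\succ K$ for some $k\ge 0$, then there is a segment $\mathbf r$ of $\mathbf t$ with length $j\le m$ such that $\mathbf r\succ K|_j$.
   Context: For $\lambda\in(1,2]$ the tent map $T_\lambda:[0,1]\to[0,1]$ is $T_\lambda(x)=\lambda x$ on $[0,1/2]$ and $\lambda(1-x)$ on $[1/2,1]$, with critical point $c=1/2$. $\Omega=\{0,1,C\}$. The address of $x$ is $0$ if $x<c$, $C$ if $x=c$, $1$ if $x>c$; the itinerary $\mathcal I(x)$ is the sequence of addresses of $x,T(x),T^2(x),\dots$; $\mathcal I^+(x)=\lim_{y\downarrow x}\mathcal I(y)$ (limit in the product topology on $\Omega^{\mathbb N}$). The kneading sequence is $K=\sigma(\mathcal I^+(c))$, $\sigma$ the shift. A word is finite string over $\Omega$; it is even if it contains an even number of $1$'s and odd otherwise. $\mathbf s|_k$ denotes the first $k$ symbols. Parity lexicographic order: set $0<C<1$; for two sequences (or two words of equal length) $\mathbf s\ne\mathbf t$ with first difference at index $k$ (i.e. $s_i=t_i$ for $i<k$, $s_k\ne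 t_k$), $\mathbf s\prec\mathbf t$ iff either $s_0\dots s_{k-1}$ is even and $s_k<t_k$, or $s_0\dots s_{k-1}$ is odd and $s_k>t_k$; $\succ$ is the reverse relation. *)

From Stdlib Require Import Reals Lra Lia.
Open Scope R_scope.

Inductive Omega : Set := Zero | One | Cs.

Definition orank (a : Omega) : nat :=
  match a with Zero => 0%nat | Cs => 1%nat | One => 2%nat end.

Definition tent (lam x : R) : R :=
  if Rle_dec x (1/2) then lam * x else lam * (1 - x).

Fixpoint tent_iter (lam : R) (n : nat) (x : R) : R :=
  match n with O => x | S k => tent lam (tent_iter lam k x) end.

Definition address (x : R) : Omega :=
  match total_order_T x (1/2) with
  | inleft (left _) => Zero
  | inleft (right _) => Cs
  | inright _ => One
  end.

Definition itin (lam x : R) : nat -> Omega :=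
  fun n => address (tent_iter lam n x).

(* s = I^+(x) = lim_{y downarrow x} I(y) in the product topology:
   every finite prefix of I(y) agrees with that of s for all y close to x on the right *)
Definition is_itin_plus (lam x : R) (s : nat -> Omega) : Prop :=
  forall n : nat, exists delta : R, delta > 0 /\
    forall y : R, x < y < x + delta -> forall i : nat, (i < n)%nat -> itin lam y i = s i.

Definition shift (s : nat -> Omega) : nat -> Omega := fun n => s (S n).
Definition shiftk (k : nat) (s : nat -> Omega) : nat -> Omega := fun n => s (k + n)%nat.

Definition is_kneading (lam : R) (K : nat -> Omega) : Prop :=
  exists s, is_itin_plus lam (1/2) s /\ K = shift s.

Fixpoint ones (s : nat -> Omega) (k : nat) : nat :=
  match k with
  | O => 0%nat
  | S k' => (ones s k' + match s k' with One => 1 | _ => 0 end)%nat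
  end.

Definition pl_gt_at (s t : nat -> Omega) (k : nat) : Prop :=
  (forall i, (i < k)%nat -> s i = t i) /\ s k <> t k /\
  ((Nat.even (ones s k) = true /\ (orank (s k) > orank (t k))%nat) \/
   (Nat.even (ones s k) = false /\ (orank (s k) < orank (t k))%nat)).

Definition seq_succ (s t : nat -> Omega) : Prop := exists k, pl_gt_at s t k.

Definition word_succ (j : nat) (s t : nat -> Omega) : Prop :=
  exists k, (k < j)%nat /\ pl_gt_at s t k.

Definition crit_period (lam : R) (m : nat) : Prop :=
  (m > 0)%nat /\ tent_iter lam m (1/2) = 1/2 /\
  forall p, (0 < p < m)%nat -> tent_iter lam p (1/2) <> 1/2.

Definition binary (a : Omega) : Prop := a = Zero \/ a = One.

(* The parity-lexicographic order on words of length N is a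
   strict total order (word_trichotomy, word_succ_trans), and an excess s ≻ u
   can be transported past a common prefix of length q, keeping its direction
   when the prefix is even and reversing it when it is odd (tail_excess).  If K
   is m-periodic with an even m-block, an excess σ^a t ≻ K at depth d ≥ m thus
   moves to σ^(a+m) t at depth d - m; iterating gives a segment r of t of
   length j ≤ m with r ≻ K|_j (short_excess).

   Itineraries are monotone (itin_monotone), locally constant
   off precritical points, and on the two sides of a point z with T^p(z) = c
   they agree with I(z) below p, have even resp. odd prefixes through p and
   continue with K (near_precritical).  Applied at z = T(c) this shows that K
   is m-periodic with an even m-block (kneading_even_periodic).  For (1), cut
   [0, T(c)] at the supremum z of the points whose itinerary is ⪯ s: as s is
   not realised, z is T(c) (then s ≻ K|_N) or a precritical point (then s lies
   between the itineraries of both sides of z, forcing σ^(p+1) s ≻ K); a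
   regular z is impossible.  short_excess then finishes. *)

From Stdlib Require Import Reals Lra Lia Arith Classical.
Open Scope R_scope.

Definition agree (N : nat) (u v : nat -> Omega) : Prop :=
  forall i, (i < N)%nat -> u i = v i.

Definition wle (N : nat) (u v : nat -> Omega) : Prop :=
  agree N u v \/ word_succ N v u.

Lemma first_failure (P : nat -> Prop) (N : nat) :
  (forall i, (i < N)%nat -> P i) \/
  exists k, (k < N)%nat /\ ~ P k /\ forall i, (i < k)%nat -> P i.
Proof.
  induction N as [|N [IH|[k [Hk [Hnk Hbelow]]]]].
  - left; intros; lia.
  - destruct (classic (P N)) as [HN|HN].
    + left; intros i Hi. destruct (Nat.eq_dec i N); [subst; exact HN|apply IH; lia].
    + right; exists N; auto.
  - right; exists k; repeat split; auto; lia.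
Qed.

Lemma orank_inj (a b : Omega) : orank a = orank b -> a = b.
Proof. destruct a, b; simpl; congruence. Qed.

Lemma agree_le (n N : nat) (u v : nat -> Omega) : (n <= N)%nat -> agree N u v -> agree n u v.
Proof. intros Hn H i Hi; apply H; lia. Qed.

Lemma ones_agree (u v : nat -> Omega) (k : nat) : agree k u v -> ones u k = ones v k.
Proof.
  induction k as [|k IH]; simpl; intros H; auto.
  rewrite IH by (apply (agree_le k (S k)); auto). rewrite (H k) by lia. reflexivity.
Qed.

Lemma ones_add (u : nat -> Omega) (p j : nat) :
  ones u (p + j) = (ones u p + ones (shiftk p u) j)%nat.
Proof.
  induction j as [|j IH]; simpl.
  - rewrite Nat.add_0_r. lia.
  - rewrite Nat.add_succ_r. simpl. rewrite IH. unfold shiftk. lia.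
Qed.

Lemma even_ones_S (u : nat -> Omega) (p : nat) :
  Nat.even (ones u (S p)) =
  match u p with One => negb (Nat.even (ones u p)) | _ => Nat.even (ones u p) end.
Proof.
  simpl. destruct (u p); rewrite ?Nat.add_0_r; auto.
  rewrite Nat.add_1_r, Nat.even_succ, <- Nat.negb_even. reflexivity.
Qed.

Lemma pl_gt_at_ext (s s' t t' : nat -> Omega) (k : nat) :
  agree (S k) s s' -> agree (S k) t t' -> pl_gt_at s t k -> pl_gt_at s' t' k.
Proof.
  intros Hs Ht [Hag [Hne Hpar]].
  assert (Eo : ones s k = ones s' k) by (apply ones_agree, (agree_le k (S k)); auto).
  unfold pl_gt_at. rewrite <- (Hs k), <- (Ht k), <- Eo by lia.
  split; [|split; auto].
  intros i Hi. rewrite <- Hs, <- Ht by lia. auto.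
Qed.

Lemma word_succ_ext (N : nat) (s s' t t' : nat -> Omega) :
  agree N s s' -> agree N t t' -> word_succ N s t -> word_succ N s' t'.
Proof.
  intros Hs Ht [k [Hk H]]. exists k; split; auto.
  eapply pl_gt_at_ext; [| |exact H]; apply (agree_le (S k) N); auto.
Qed.

Lemma pl_gt_at_either (u v : nat -> Omega) (k : nat) :
  agree k u v -> u k <> v k -> pl_gt_at u v k \/ pl_gt_at v u k.
Proof.
  intros Hag Hne.
  assert (Eo : ones v k = ones u k) by (symmetry; apply ones_agree; auto).
  assert (Hr : orank (u k) <> orank (v k)) by (intro E; apply Hne, orank_inj, E).
  assert (Hag' : agree k v u) by (intros i Hi; symmetry; auto).
  unfold pl_gt_at. rewrite Eo.
  destruct (Nat.even (ones u k)) eqn:Ev;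
    destruct (Nat.lt_ge_cases (orank (u k)) (orank (v k))).
  - right. split; [exact Hag'|split; [congruence|left; split; [reflexivity|lia]]].
  - left. split; [exact Hag|split; [exact Hne|left; split; [reflexivity|lia]]].
  - left. split; [exact Hag|split; [exact Hne|right; split; [reflexivity|lia]]].
  - right. split; [exact Hag'|split; [congruence|right; split; [reflexivity|lia]]].
Qed.

Lemma word_trichotomy (N : nat) (u v : nat -> Omega) :
  agree N u v \/ word_succ N u v \/ word_succ N v u.
Proof.
  destruct (first_failure (fun i => u i = v i) N) as [H|[k [Hk [Hne Hag]]]];
    [left; exact H|right].
  destruct (pl_gt_at_either u v k Hag Hne); [left|right]; exists k; auto.
Qed.

Lemma pl_trans (u v w : nat -> Omega) (k1 k2 : nat) :
  pl_gt_at v u k1 -> pl_gt_at w v k2 -> pl_gt_at w u (Nat.min k1 k2).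
Proof.
  intros [A1 [A2 A3]] [B1 [B2 B3]].
  destruct (Nat.lt_total k1 k2) as [Hl|[He|Hl]].
  - rewrite Nat.min_l by lia.
    assert (Ew : w k1 = v k1) by (apply B1; lia).
    assert (Eo : ones w k1 = ones v k1) by (apply ones_agree; intros i Hi; apply B1; lia).
    split; [intros i Hi; rewrite <- A1 by lia; apply B1; lia|].
    rewrite Ew, Eo. auto.
  - subst k2. rewrite Nat.min_id.
    assert (Eo : ones w k1 = ones v k1) by (apply ones_agree; intros i Hi; apply B1; lia).
    split; [intros i Hi; rewrite <- A1 by lia; apply B1; lia|].
    rewrite Eo.
    destruct A3 as [[Ea Oa]|[Ea Oa]]; destruct B3 as [[Eb Ob]|[Eb Ob]];
      rewrite Eo in Eb; try congruence.
    + split; [intro Hc; rewrite Hc in *; lia|]. left; split; auto; lia.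
    + split; [intro Hc; rewrite Hc in *; lia|]. right; split; auto; lia.
  - rewrite Nat.min_r by lia.
    assert (Eu : u k2 = v k2) by (symmetry; apply A1; lia).
    split; [intros i Hi; rewrite <- A1 by lia; apply B1; lia|].
    rewrite Eu. auto.
Qed.

Lemma word_succ_trans (N : nat) (u v w : nat -> Omega) :
  word_succ N v u -> word_succ N w v -> word_succ N w u.
Proof.
  intros [k1 [H1 P1]] [k2 [H2 P2]]. exists (Nat.min k1 k2). split; [lia|].
  eapply pl_trans; eauto.
Qed.

Lemma wle_trans (N : nat) (u v w : nat -> Omega) : wle N u v -> wle N v w -> wle N u w.
Proof.
  intros [A|A] [B|B].
  - left; intros i Hi; rewrite A, B; auto.
  - right. eapply word_succ_ext; [| |exact B]; intros i Hi; auto. symmetry; auto.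
  - right. eapply word_succ_ext; [| |exact A]; intros i Hi; auto.
  - right. eapply word_succ_trans; eauto.
Qed.

Lemma word_succ_not_wle (N : nat) (u s : nat -> Omega) : word_succ N u s -> ~ wle N u s.
Proof.
  intros Hus [E|W].
  - destruct Hus as [k [Hk [_ [Hne _]]]]. apply Hne, E, Hk.
  - destruct (word_succ_trans N u s u W Hus) as [k [_ [_ [Hne _]]]]. auto.
Qed.

(* Transport of an excess along a common prefix of length q: if the prefix is
   even, s ≻ u at k becomes σ^q s ≻ σ^q u at k - q; if it is odd, the roles of s
   and u are exchanged.  Here σ^q u is replaced by any K it agrees with. *)
Lemma tail_excess (s u K : nat -> Omega) (q k : nat) :
  (q <= k)%nat -> agree (S (k - q)) (shiftk q u) K ->
  (if Nat.even (ones s q) then pl_gt_at s u k else pl_gt_at u s k) ->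
  pl_gt_at (shiftk q s) K (k - q).
Proof.
  intros Hqk Htail Hgt.
  assert (Hsplit : ones s k = (ones s q + ones (shiftk q s) (k - q))%nat)
    by (rewrite <- ones_add; f_equal; lia).
  assert (Es : shiftk q s (k - q) = s k) by (unfold shiftk; f_equal; lia).
  assert (Eu : K (k - q)%nat = u k).
  { rewrite <- (Htail (k - q)%nat) by lia. unfold shiftk; f_equal; lia. }
  assert (Hpre : forall i, (i < k - q)%nat -> s (q + i)%nat = u (q + i)%nat ->
                   shiftk q s i = K i).
  { intros i Hi E. rewrite <- (Htail i) by lia. exact E. }
  unfold pl_gt_at. rewrite Es, Eu.
  destruct (Nat.even (ones s q)) eqn:Eq; destruct Hgt as [Hag [Hne Hpar]].
  - rewrite Hsplit, Nat.even_add, Eq in Hpar.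
    split; [intros i Hi; apply Hpre; [lia|apply Hag; lia]|split; auto].
    destruct (Nat.even (ones (shiftk q s) (k - q))); simpl in Hpar; auto.
  - assert (Eo : ones u k = ones s k) by (apply ones_agree; auto).
    rewrite Eo, Hsplit, Nat.even_add, Eq in Hpar.
    split; [intros i Hi; apply Hpre; [lia|symmetry; apply Hag; lia]|split; auto].
    destruct (Nat.even (ones (shiftk q s) (k - q))); simpl in Hpar;
      destruct Hpar as [[? ?]|[? ?]]; try discriminate; [left|right]; split; auto.
Qed.

Definition even_periodic (m : nat) (K : nat -> Omega) : Prop :=
  (m > 0)%nat /\ (forall i, K (i + m)%nat = K i) /\ Nat.even (ones K m) = true.

(* Periodic reduction: when K is m-periodic with an even m-block, an excess of
   σ^a t over K at depth d ≥ m yields one of σ^(a+m) t at depth d - m; hence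
   some shift of t exceeds K at a depth below m. *)
Lemma excess_below_period (m : nat) (K t : nat -> Omega) :
  even_periodic m K -> forall d a, pl_gt_at (shiftk a t) K d ->
  exists a' d', (d' < m)%nat /\ (a' + d' = a + d)%nat /\ pl_gt_at (shiftk a' t) K d'.
Proof.
  intros [Hm [Hper Hev]] d. induction d as [d IH] using lt_wf_ind. intros a Hgt.
  destruct (Nat.lt_ge_cases d m) as [Hd|Hd]; [exists a, d; auto|].
  assert (Hstep : pl_gt_at (shiftk m (shiftk a t)) K (d - m)).
  { apply (tail_excess (shiftk a t) K K m d); [exact Hd| |].
    - intros j _. unfold shiftk. rewrite Nat.add_comm. apply Hper.
    - assert (Eo : ones (shiftk a t) m = ones K m).
      { apply ones_agree. intros i Hi. apply (proj1 Hgt). lia. }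
      rewrite Eo, Hev. exact Hgt. }
  assert (Hstep' : pl_gt_at (shiftk (a + m) t) K (d - m)).
  { eapply pl_gt_at_ext; [| |exact Hstep]; intros i _; [|reflexivity].
    unfold shiftk. f_equal. lia. }
  destruct (IH (d - m)%nat ltac:(lia) (a + m)%nat Hstep') as [a' [d' [Hd' [Hsum Hgt']]]].
  exists a', d'. split; [exact Hd'|split; [lia|exact Hgt']].
Qed.

Lemma short_excess (m : nat) (K t : nat -> Omega) (a d : nat) :
  even_periodic m K -> pl_gt_at (shiftk a t) K d ->
  exists a' j, (1 <= j <= m)%nat /\ (a' + j <= S (a + d))%nat /\
    word_succ j (fun i => t (a' + i)%nat) K.
Proof.
  intros Hper Hgt.
  destruct (excess_below_period m K t Hper d a Hgt) as [a' [d' [Hd' [Hsum Hgt']]]].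
  exists a', (S d'). split; [lia|split; [lia|]]. exists d'. split; [lia|exact Hgt'].
Qed.

Lemma excess_between (u v s K : nat -> Omega) (N p : nat) :
  agree p u v -> binary (u p) -> binary (v p) -> binary (s p) ->
  Nat.even (ones u (S p)) = true -> Nat.even (ones v (S p)) = false ->
  agree (N - S p) (shiftk (S p) u) K -> agree (N - S p) (shiftk (S p) v) K ->
  word_succ N s u -> word_succ N v s ->
  exists d, (S p + d < N)%nat /\ pl_gt_at (shiftk (S p) s) K d.
Proof.
  intros Huv Hu Hv Hs Heu Hov Htu Htv [k1 [Hk1 P1]] [k2 [Hk2 P2]].
  assert (Hp : (p <= Nat.min k1 k2)%nat).
  { destruct (Nat.lt_ge_cases (Nat.min k1 k2) p) as [Hlt|Hge]; [exfalso|exact Hge].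
    destruct (pl_trans u s v k1 k2 P1 P2) as [_ [Hne _]]. apply Hne. symmetry. auto. }
  assert (Hneq : u p <> v p).
  { intro E. assert (Eo : ones u (S p) = ones v (S p)).
    { apply ones_agree. intros i Hi. destruct (Nat.eq_dec i p); [subst; exact E|].
      apply Huv. lia. }
    congruence. }
  assert (Hsp : s p = u p \/ s p = v p).
  { destruct Hu as [Hu|Hu]; destruct Hv as [Hv|Hv]; destruct Hs as [Hs|Hs];
      rewrite Hu, Hv, Hs in *; first [left; reflexivity|right; reflexivity|congruence]. }
  destruct Hsp as [Hsp|Hsp].
  - assert (Hk1p : (S p <= k1)%nat).
    { destruct (Nat.eq_dec k1 p); [|lia]. subst k1. destruct P1 as [_ [Hne _]]. congruence. }
    exists (k1 - S p)%nat. split; [lia|].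
    apply (tail_excess s u K (S p) k1); [exact Hk1p|apply (agree_le _ (N - S p)); [lia|exact Htu]|].
    assert (Eo : ones s (S p) = ones u (S p)).
    { apply ones_agree. intros i Hi. destruct (Nat.eq_dec i p); [subst; exact Hsp|].
      apply (proj1 P1). lia. }
    rewrite Eo, Heu. exact P1.
  - assert (Hk2p : (S p <= k2)%nat).
    { destruct (Nat.eq_dec k2 p); [|lia]. subst k2. destruct P2 as [_ [Hne _]]. congruence. }
    exists (k2 - S p)%nat. split; [lia|].
    apply (tail_excess s v K (S p) k2); [exact Hk2p|apply (agree_le _ (N - S p)); [lia|exact Htv]|].
    assert (Eo : ones s (S p) = ones v (S p)).
    { apply ones_agree. intros i Hi. destruct (Nat.eq_dec i p); [subst; exact Hsp|].
      symmetry. apply (proj1 P2). lia. }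
    rewrite Eo, Hov. exact P2.
Qed.

Lemma tent_iter_add (lam : R) (a b : nat) (x : R) :
  tent_iter lam (a + b) x = tent_iter lam b (tent_iter lam a x).
Proof.
  induction b as [|b IH]; simpl.
  - rewrite Nat.add_0_r; reflexivity.
  - rewrite Nat.add_succ_r. simpl. rewrite IH. reflexivity.
Qed.

Lemma itin_add (lam x : R) (a i : nat) : itin lam x (a + i) = itin lam (tent_iter lam a x) i.
Proof. unfold itin. rewrite tent_iter_add. reflexivity. Qed.

Lemma itin_S (lam x : R) (i : nat) : itin lam x (S i) = itin lam (tent lam x) i.
Proof. exact (itin_add lam x 1 i). Qed.

Lemma address_lt (x : R) : x < 1/2 -> address x = Zero.
Proof. intros Hx; unfold address; destruct (total_order_T x (1/2)) as [[H|H]|H]; auto; lra. Qed.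

Lemma address_gt (x : R) : x > 1/2 -> address x = One.
Proof. intros Hx; unfold address; destruct (total_order_T x (1/2)) as [[H|H]|H]; auto; lra. Qed.

Lemma address_Cs (x : R) : address x = Cs <-> x = 1/2.
Proof.
  unfold address; destruct (total_order_T x (1/2)) as [[H|H]|H]; split; intro E;
    auto; try discriminate; lra.
Qed.

Lemma address_Zero (x : R) : address x = Zero -> x < 1/2.
Proof. unfold address; destruct (total_order_T x (1/2)) as [[H|H]|H]; auto; congruence. Qed.

Lemma address_One (x : R) : address x = One -> x > 1/2.
Proof. unfold address; destruct (total_order_T x (1/2)) as [[H|H]|H]; auto; congruence. Qed.

Lemma address_mono (a b : R) : a < b -> (orank (address a) <= orank (address b))%nat.
Proof.
  intros H. unfold address.
  destruct (total_order_T a (1/2)) as [[Ha|Ha]|Ha];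
  destruct (total_order_T b (1/2)) as [[Hb|Hb]|Hb]; simpl; lia || lra.
Qed.

Lemma address_near (a b : R) : Rabs (a - b) < Rabs (b - 1/2) -> address a = address b.
Proof.
  intros H. destruct (total_order_T b (1/2)) as [[Hb|Hb]|Hb].
  - rewrite !address_lt; auto; unfold Rabs in H; destruct (Rcase_abs _); destruct (Rcase_abs _); lra.
  - subst. unfold Rabs in H; destruct (Rcase_abs _); destruct (Rcase_abs _); lra.
  - rewrite !address_gt; auto; unfold Rabs in H; destruct (Rcase_abs _); destruct (Rcase_abs _); lra.
Qed.

Lemma tent_le (lam x : R) : x <= 1/2 -> tent lam x = lam * x.
Proof. intros; unfold tent; destruct (Rle_dec x (1/2)); auto; lra. Qed.

Lemma tent_gt (lam x : R) : x > 1/2 -> tent lam x = lam * (1 - x).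
Proof. intros; unfold tent; destruct (Rle_dec x (1/2)); auto; lra. Qed.

Lemma tent_c (lam : R) : tent lam (1/2) = lam / 2.
Proof. rewrite tent_le by lra. field. Qed.

Lemma tent_distance (lam u : R) : tent lam u = lam / 2 - lam * Rabs (u - 1/2).
Proof.
  destruct (Rle_dec u (1/2)).
  - rewrite tent_le, Rabs_left1 by lra. field.
  - rewrite tent_gt, Rabs_right by lra. field.
Qed.

Lemma tent_iter_lipschitz (lam : R) (n : nat) (a b : R) : 0 < lam ->
  Rabs (tent_iter lam n a - tent_iter lam n b) <= lam ^ n * Rabs (a - b).
Proof.
  intros Hl. induction n as [|n IH]; simpl; [lra|].
  apply Rle_trans with (lam * Rabs (tent_iter lam n a - tent_iter lam n b)).
  - unfold tent. destruct (Rle_dec _ (1/2)), (Rle_dec _ (1/2));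
      unfold Rabs; destruct (Rcase_abs _); destruct (Rcase_abs _); nra.
  - rewrite Rmult_assoc. apply Rmult_le_compat_l; lra.
Qed.

Lemma tent_iter_continuous (lam : R) (n : nat) (a e : R) : 0 < lam -> 0 < e ->
  exists d, d > 0 /\ forall b, Rabs (b - a) < d ->
    Rabs (tent_iter lam n b - tent_iter lam n a) < e.
Proof.
  intros Hl He. assert (P : 0 < lam ^ n) by (apply pow_lt; auto).
  exists (e / lam ^ n). split; [apply Rdiv_lt_0_compat; auto|].
  intros b Hb. eapply Rle_lt_trans; [apply tent_iter_lipschitz; auto|].
  apply (Rmult_lt_compat_l (lam ^ n)) in Hb; auto.
  replace (lam ^ n * (e / lam ^ n)) with e in Hb by (field; lra). exact Hb.
Qed.

Lemma itin_locally_constant (lam z : R) (N : nat) : 0 < lam ->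
  (forall i, (i < N)%nat -> itin lam z i <> Cs) ->
  exists d, d > 0 /\ forall y, Rabs (y - z) < d -> agree N (itin lam y) (itin lam z).
Proof.
  intros Hl. induction N as [|N IH]; intros Hnc.
  - exists 1; split; [lra|]. intros y _ i Hi; lia.
  - destruct IH as [d1 [Hd1 H1]]; [intros i Hi; apply Hnc; lia|].
    assert (He : Rabs (tent_iter lam N z - 1/2) > 0).
    { apply Rabs_pos_lt. intro E. apply (Hnc N); [lia|]. apply address_Cs. lra. }
    destruct (tent_iter_continuous lam N z _ Hl He) as [d2 [Hd2 H2]].
    exists (Rmin d1 d2). split; [apply Rmin_glb_lt; auto|].
    intros y Hy i Hi. destruct (Nat.eq_dec i N) as [->|Hne].
    + apply address_near, H2. eapply Rlt_le_trans; [exact Hy|apply Rmin_r].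
    + apply H1; [eapply Rlt_le_trans; [exact Hy|apply Rmin_l]|lia].
Qed.

Lemma iterate_order (lam x y : R) (k : nat) : 0 < lam -> x < y ->
  agree k (itin lam x) (itin lam y) ->
  if Nat.even (ones (itin lam x) k) then tent_iter lam k x < tent_iter lam k y
  else tent_iter lam k y < tent_iter lam k x.
Proof.
  intros Hl Hxy. induction k as [|k IH]; intros Hag; [exact Hxy|].
  assert (IH' := IH (agree_le k (S k) _ _ ltac:(lia) Hag)).
  assert (Hk := Hag k ltac:(lia)). unfold itin in Hk.
  rewrite even_ones_S. simpl tent_iter. unfold itin at 1.
  set (a := tent_iter lam k x) in *. set (b := tent_iter lam k y) in *.
  destruct (address a) eqn:Ea.
  - assert (a < 1/2) by (apply address_Zero; auto).
    assert (b < 1/2) by (apply address_Zero; rewrite <- Hk; auto).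
    rewrite !tent_le by lra. destruct (Nat.even _); nra.
  - assert (a > 1/2) by (apply address_One; auto).
    assert (b > 1/2) by (apply address_One; rewrite <- Hk; auto).
    rewrite !tent_gt by lra. destruct (Nat.even _); simpl; nra.
  - assert (a = 1/2) by (apply address_Cs; auto).
    assert (b = 1/2) by (apply address_Cs; rewrite <- Hk; auto).
    destruct (Nat.even _); lra.
Qed.

Lemma itin_monotone (lam x y : R) (N : nat) : 0 < lam -> x < y ->
  wle N (itin lam x) (itin lam y).
Proof.
  intros Hl Hxy.
  destruct (first_failure (fun i => itin lam x i = itin lam y i) N)
    as [H|[k [Hk [Hne Hag]]]]; [left; exact H|right].
  exists k. split; [exact Hk|].
  assert (Eo : ones (itin lam y) k = ones (itin lam x) k)
    by (symmetry; apply ones_agree; exact Hag).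
  assert (Hr : orank (itin lam x k) <> orank (itin lam y k)) by (intro E; apply Hne, orank_inj, E).
  assert (Hord := iterate_order lam x y k Hl Hxy Hag).
  split; [intros i Hi; symmetry; apply Hag, Hi|split; [intro E; apply Hne; symmetry; exact E|]].
  rewrite Eo. unfold itin in Hr |- *.
  destruct (Nat.even _); [left|right]; split; auto;
    [assert (X := address_mono _ _ Hord)|assert (X := address_mono _ _ Hord)]; lia.
Qed.

(* 0 is a fixed point in [0, c), so its itinerary is 000... *)
Lemma itin_zero (lam : R) (i : nat) : itin lam 0 i = Zero.
Proof.
  unfold itin. apply address_lt. replace (tent_iter lam i 0) with 0; [lra|].
  induction i as [|i IH]; simpl; [reflexivity|]. rewrite <- IH, tent_le by lra. ring.
Qed.

Lemma itin_zero_least (lam : R) (N : nat) (s : nat -> Omega) : wle N (itin lam 0) s.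
Proof.
  assert (Z : forall n, ones (itin lam 0) n = 0%nat).
  { induction n as [|n IH]; simpl; [reflexivity|]. rewrite IH, itin_zero. reflexivity. }
  destruct (word_trichotomy N (itin lam 0) s) as [H|[[k [_ [_ [_ Hpar]]]]|H]];
    [left; exact H| |right; exact H].
  exfalso. rewrite itin_zero, Z in Hpar. simpl in Hpar.
  destruct Hpar as [[_ X]|[X _]]; [lia|discriminate].
Qed.

Lemma point_left (z d : R) : 0 < z -> 0 < d -> exists y, 0 <= y /\ z - d < y < z.
Proof.
  intros Hz Hd. exists (z - Rmin d z / 2).
  assert (H1 := Rmin_l d z). assert (H2 := Rmin_r d z).
  assert (H0 : 0 < Rmin d z) by (apply Rmin_glb_lt; auto). lra.
Qed.

Lemma point_right (z b d : R) : z < b -> 0 < d -> exists y, z < y <= b /\ y < z + d.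
Proof.
  intros Hz Hd. exists (z + Rmin d (b - z) / 2).
  assert (H1 := Rmin_l d (b - z)). assert (H2 := Rmin_r d (b - z)).
  assert (H0 : 0 < Rmin d (b - z)) by (apply Rmin_glb_lt; lra). lra.
Qed.

(* Points just to the left of the critical value T(c) = lam/2 have itineraries
   beginning with K: they are images of points just to the right of c. *)
Lemma itin_left_of_critical_value (lam : R) (K : nat -> Omega) (n : nat) :
  0 < lam -> is_kneading lam K ->
  exists e, e > 0 /\ forall t, lam / 2 - e < t < lam / 2 -> agree n (itin lam t) K.
Proof.
  intros Hl [s0 [Hs HKe]]. destruct (Hs (S n)) as [d [Hd Hy]].
  exists (lam * d). split; [nra|]. intros t Ht j Hj.
  set (u := 1 - t / lam).
  assert (Et : t = lam * (1 - u)) by (unfold u; field; lra).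
  assert (Hu : 1/2 < u < 1/2 + d) by (rewrite Et in Ht; split; nra).
  rewrite Et, <- (tent_gt lam u), <- itin_S, HKe by lra. apply Hy; [lra|lia].
Qed.

Lemma itin_image_near_critical (lam : R) (K : nat -> Omega) (n : nat) :
  0 < lam -> is_kneading lam K ->
  exists d, d > 0 /\ forall w, 0 < Rabs (w - 1/2) < d -> agree n (itin lam (tent lam w)) K.
Proof.
  intros Hl HK. destruct (itin_left_of_critical_value lam K n Hl HK) as [e [He H]].
  exists (e / lam). split; [apply Rdiv_lt_0_compat; auto|].
  intros w [Hw0 Hw]. apply H. rewrite tent_distance.
  apply (Rmult_lt_compat_l lam) in Hw; auto.
  replace (lam * (e / lam)) with e in Hw by (field; lra). nra.
Qed.

Lemma parity_left_of_precritical (lam z y : R) (p : nat) : 0 < lam ->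
  tent_iter lam p z = 1/2 -> y < z -> agree p (itin lam y) (itin lam z) ->
  binary (itin lam y p) /\ Nat.even (ones (itin lam y) (S p)) = true.
Proof.
  intros Hl Hz Hyz Hag. assert (Hord := iterate_order lam y z p Hl Hyz Hag).
  rewrite even_ones_S. rewrite Hz in Hord.
  destruct (Nat.even _) eqn:Ev.
  - assert (E : itin lam y p = Zero) by (apply address_lt, Hord).
    rewrite E. split; [left|]; reflexivity.
  - assert (E : itin lam y p = One) by (apply address_gt, Hord).
    rewrite E. split; [right|]; reflexivity.
Qed.

Lemma parity_right_of_precritical (lam z y : R) (p : nat) : 0 < lam ->
  tent_iter lam p z = 1/2 -> z < y -> agree p (itin lam y) (itin lam z) ->
  binary (itin lam y p) /\ Nat.even (ones (itin lam y) (S p)) = false.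
Proof.
  intros Hl Hz Hzy Hag.
  assert (Hord := iterate_order lam z y p Hl Hzy (fun i Hi => eq_sym (Hag i Hi))).
  rewrite (ones_agree _ _ p (fun i Hi => eq_sym (Hag i Hi))) in Hord.
  rewrite even_ones_S. rewrite Hz in Hord.
  destruct (Nat.even _) eqn:Ev.
  - assert (E : itin lam y p = One) by (apply address_gt, Hord).
    rewrite E. split; [right|]; reflexivity.
  - assert (E : itin lam y p = Zero) by (apply address_lt, Hord).
    rewrite E. split; [left|]; reflexivity.
Qed.

Lemma near_precritical (lam : R) (K : nat -> Omega) (z : R) (p n : nat) :
  0 < lam -> is_kneading lam K ->
  itin lam z p = Cs -> (forall i, (i < p)%nat -> itin lam z i <> Cs) ->
  exists d, d > 0 /\ forall y, Rabs (y - z) < d -> y <> z ->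
    agree p (itin lam y) (itin lam z) /\ binary (itin lam y p) /\
    (y < z -> Nat.even (ones (itin lam y) (S p)) = true) /\
    (z < y -> Nat.even (ones (itin lam y) (S p)) = false) /\
    agree n (shiftk (S p) (itin lam y)) K.
Proof.
  intros Hl HK Hzp Hpre.
  assert (Tz : tent_iter lam p z = 1/2) by (apply address_Cs, Hzp).
  destruct (itin_locally_constant lam z p Hl Hpre) as [d1 [Hd1 H1]].
  destruct (itin_image_near_critical lam K n Hl HK) as [e [He H2]].
  destruct (tent_iter_continuous lam p z e Hl He) as [d3 [Hd3 H3]].
  exists (Rmin d1 d3). split; [apply Rmin_glb_lt; auto|]. intros y Hy Hne.
  assert (Hag : agree p (itin lam y) (itin lam z))
    by (apply H1; eapply Rlt_le_trans; [exact Hy|apply Rmin_l]).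
  assert (Hside : (binary (itin lam y p) /\ Nat.even (ones (itin lam y) (S p)) = true /\ y < z) \/
                  (binary (itin lam y p) /\ Nat.even (ones (itin lam y) (S p)) = false /\ z < y)).
  { destruct (Rtotal_order y z) as [Hlt|[Heq|Hgt]]; [left|contradiction|right].
    - destruct (parity_left_of_precritical lam z y p Hl Tz Hlt Hag); auto.
    - destruct (parity_right_of_precritical lam z y p Hl Tz Hgt Hag); auto. }
  assert (Hbin : binary (itin lam y p)) by (destruct Hside as [[? _]|[? _]]; auto).
  split; [exact Hag|split; [exact Hbin|split; [|split]]].
  - intro Hlt. destruct Hside as [[_ [? _]]|[_ [_ ?]]]; auto. lra.
  - intro Hgt. destruct Hside as [[_ [_ ?]]|[_ [? _]]]; auto. lra.
  - assert (Hyc : tent_iter lam p y <> 1/2).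
    { intro E. apply address_Cs in E. unfold itin in Hbin.
      destruct Hbin as [B|B]; congruence. }
    intros j Hj. unfold shiftk.
    replace (S p + j)%nat with (p + S j)%nat by lia. rewrite itin_add, itin_S.
    apply H2; [|exact Hj]. rewrite <- Tz. split.
    + apply Rabs_pos_lt. lra.
    + apply H3. eapply Rlt_le_trans; [exact Hy|apply Rmin_r].
Qed.

(* Indeed T(c)
   first returns to c at time m - 1; just to the left of T(c) itineraries begin
   with K, and by near_precritical they also have an even prefix of length m and
   continue with K from index m on. *)
Lemma kneading_even_periodic (lam : R) (m : nat) (K : nat -> Omega) :
  0 < lam -> crit_period lam m -> is_kneading lam K -> even_periodic m K.
Proof.
  intros Hl [Hm [HTm Hnp]] HK. destruct m as [|p]; [lia|].
  assert (Hc1 : tent lam (1/2) = lam / 2) by apply tent_c.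
  assert (Hcp : itin lam (lam / 2) p = Cs).
  { rewrite <- Hc1, <- itin_S. apply address_Cs, HTm. }
  assert (Hpre : forall i, (i < p)%nat -> itin lam (lam / 2) i <> Cs).
  { intros i Hi E. rewrite <- Hc1, <- itin_S in E. apply (Hnp (S i)); [lia|].
    apply address_Cs, E. }
  assert (Hnear : forall n, exists y, agree (S p + n) (itin lam y) K /\ y < lam / 2 /\
             Nat.even (ones (itin lam y) (S p)) = true /\ agree n (shiftk (S p) (itin lam y)) K).
  { intro n.
    destruct (itin_left_of_critical_value lam K (S p + n) Hl HK) as [e [He H1]].
    destruct (near_precritical lam K (lam / 2) p n Hl HK Hcp Hpre) as [d [Hd H2]].
    destruct (point_left (lam / 2) (Rmin e d)) as [y [_ Hy]];
      [lra|apply Rmin_glb_lt; auto|].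
    assert (He' := Rmin_l e d). assert (Hd' := Rmin_r e d).
    destruct (H2 y) as [_ [_ [Hev [_ Htail]]]]; [apply Rabs_def1; lra|lra|].
    exists y. split; [apply H1; lra|split; [lra|split; [apply Hev; lra|exact Htail]]]. }
  split; [lia|split].
  - intro i. destruct (Hnear (S i)) as [y [Hy [_ [_ Htail]]]].
    transitivity (itin lam y (S p + i)); [|apply Htail; lia].
    rewrite <- Hy by lia. f_equal. lia.
  - destruct (Hnear 0%nat) as [y [Hy [_ [Hev _]]]].
    rewrite <- Hev. f_equal. symmetry. apply ones_agree, (agree_le (S p) (S p + 0)); [lia|exact Hy].
Qed.

(* The cut point: z = sup {x ∈ [0, b] : I(x)|_N ⪯ s}.  By monotonicity every
   itinerary left of z is ⪯ s, and every one right of z (up to b) is ≻ s. *)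
Lemma itinerary_cut (lam : R) (N : nat) (s : nat -> Omega) (b : R) :
  0 < lam -> 0 <= b ->
  exists z, 0 <= z <= b /\
    (forall y, 0 <= y < z -> wle N (itin lam y) s) /\
    (forall y, z < y <= b -> word_succ N (itin lam y) s).
Proof.
  intros Hl Hb.
  set (E := fun x => 0 <= x <= b /\ wle N (itin lam x) s).
  assert (E0 : E 0) by (split; [lra|apply itin_zero_least]).
  assert (Hbd : bound E) by (exists b; intros x [Hx _]; lra).
  destruct (completeness E Hbd (ex_intro _ 0 E0)) as [z [Hub Hlub]].
  assert (Hz0 : 0 <= z) by (apply Hub, E0).
  assert (Hzb : z <= b) by (apply Hlub; intros x [Hx _]; lra).
  exists z. split; [lra|split].
  - intros y Hy. destruct (classic (exists x, E x /\ y < x)) as [[x [[_ Ex] Hyx]]|Hn].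
    + eapply wle_trans; [apply itin_monotone; eauto|exact Ex].
    + exfalso. assert (Hu : is_upper_bound E y).
      { intros x Ex. destruct (Rle_lt_dec x y); auto. exfalso; apply Hn; eauto. }
      assert (X := Hlub y Hu). lra.
  - intros y Hy. destruct (word_trichotomy N (itin lam y) s) as [H|[H|H]]; [| exact H |];
      exfalso; assert (Ey : E y) by (split; [lra|unfold wle; auto]);
      assert (X := Hub y Ey); lra.
Qed.

Section NonAdmissibleWord.

Variables (lam : R) (K : nat -> Omega) (N : nat) (s : nat -> Omega).
Hypothesis Hlam : 0 < lam.
Hypothesis HK : is_kneading lam K.
Hypothesis Hbin : forall i, (i < N)%nat -> binary (s i).
Hypothesis Hnot : forall x, 0 <= x <= lam / 2 -> ~ agree N (itin lam x) s.

Definition excess_within : Prop :=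
  exists a d, (a + d < N)%nat /\ pl_gt_at (shiftk a s) K d.

(* Cut at T(c): itineraries just left of T(c) begin with K and lie below s. *)
Lemma cut_at_critical_value :
  (forall y, 0 <= y < lam / 2 -> wle N (itin lam y) s) -> excess_within.
Proof.
  intros Hleft.
  destruct (itin_left_of_critical_value lam K N Hlam HK) as [e [He HKy]].
  destruct (point_left (lam / 2) e) as [y [Hy0 Hy]]; [lra|exact He|].
  destruct (Hleft y ltac:(lra)) as [Hag|Hgt]; [exfalso; apply (Hnot y); [lra|exact Hag]|].
  destruct (word_succ_ext N s s (itin lam y) K (fun _ _ => eq_refl) (HKy y Hy) Hgt)
    as [k [Hk Hgt']].
  exists 0%nat, k. split; [lia|exact Hgt'].
Qed.

(* A cut strictly inside [0, T(c)) cannot be a point whose first N symbols are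
   locally constant: s would be both ⪰ and ≺ that common itinerary. *)
Lemma cut_not_regular (z : R) :
  0 <= z < lam / 2 ->
  (forall y, 0 <= y < z -> wle N (itin lam y) s) ->
  (forall y, z < y <= lam / 2 -> word_succ N (itin lam y) s) ->
  ~ (forall i, (i < N)%nat -> itin lam z i <> Cs).
Proof.
  intros Hz Hleft Hright Hnc.
  destruct (itin_locally_constant lam z N Hlam Hnc) as [d [Hd Hloc]].
  assert (Wz : wle N (itin lam z) s).
  { destruct (Req_dec z 0) as [->|Z0]; [apply itin_zero_least|].
    destruct (point_left z d) as [y [Hy0 Hy]]; [lra|exact Hd|].
    eapply wle_trans; [|apply (Hleft y); lra].
    left. intros i Hi. symmetry. apply Hloc; [apply Rabs_def1; lra|exact Hi]. }
  destruct (point_right z (lam / 2) d) as [y [Hy Hyd]]; [lra|exact Hd|].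
  apply (word_succ_not_wle N (itin lam z) s); [|exact Wz].
  eapply word_succ_ext; [apply (Hloc y); apply Rabs_def1; lra|intros i _; reflexivity|].
  apply Hright, Hy.
Qed.

(* Cut at a point z whose orbit first hits c at time p < N: s lies strictly
   between the itineraries of the two sides of z, so σ^(p+1) s ≻ K. *)
Lemma cut_at_precritical (z : R) (p : nat) :
  0 <= z < lam / 2 ->
  (forall y, 0 <= y < z -> wle N (itin lam y) s) ->
  (forall y, z < y <= lam / 2 -> word_succ N (itin lam y) s) ->
  (p < N)%nat -> itin lam z p = Cs -> (forall i, (i < p)%nat -> itin lam z i <> Cs) ->
  excess_within.
Proof.
  intros Hz Hleft Hright Hp Hzp Hpre.
  assert (Zp : 0 < z).
  { destruct (Req_dec z 0) as [Z0|Z0]; [|lra]. subst z. rewrite itin_zero in Hzp. discriminate. }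
  destruct (near_precritical lam K z p N Hlam HK Hzp Hpre) as [d [Hd Hnear]].
  destruct (point_left z d) as [yl [Hyl0 Hyl]]; [exact Zp|exact Hd|].
  destruct (point_right z (lam / 2) d) as [yr [Hyr Hyrd]]; [lra|exact Hd|].
  destruct (Hnear yl) as [Agl [Bl [Pl [_ Tl]]]]; [apply Rabs_def1; lra|lra|].
  destruct (Hnear yr) as [Agr [Br [_ [Pr Tr]]]]; [apply Rabs_def1; lra|lra|].
  assert (Wl : word_succ N s (itin lam yl)).
  { destruct (Hleft yl ltac:(lra)) as [Hag|Hgt]; [|exact Hgt].
    exfalso. apply (Hnot yl); [lra|exact Hag]. }
  destruct (excess_between (itin lam yl) (itin lam yr) s K N p) as [d' [Hd' Hgt]];
    [intros i Hi; rewrite Agl, Agr; auto|exact Bl|exact Br|apply Hbin, Hp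
    |apply Pl; lra|apply Pr; lra|apply (agree_le _ N); [lia|exact Tl]
    |apply (agree_le _ N); [lia|exact Tr]|exact Wl|apply Hright; lra|].
  exists (S p), d'. split; [lia|exact Hgt].
Qed.

Lemma nonadmissible_excess : excess_within.
Proof.
  destruct (itinerary_cut lam N s (lam / 2) Hlam ltac:(lra)) as [z [Hz [Hleft Hright]]].
  destruct (Req_dec z (lam / 2)) as [->|Hzc]; [exact (cut_at_critical_value Hleft)|].
  destruct (first_failure (fun i => itin lam z i <> Cs) N) as [Hnc|[p [Hp [Hzp Hpre]]]].
  - exfalso. apply (cut_not_regular z); [lra|exact Hleft|exact Hright|exact Hnc].
  - apply (cut_at_precritical z p); [lra|exact Hleft|exact Hright|exact Hp|apply NNPP, Hzp|exact Hpre].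
Qed.

End NonAdmissibleWord.

Theorem mainTheorem4 (lam : R) (m : nat) (K : nat -> Omega) :
  1 < lam < 2 ->
  crit_period lam m -> (m >= 3)%nat ->
  is_kneading lam K ->
  (* (1) *)
  (forall (N : nat) (s : nat -> Omega),
     (forall i, (i < N)%nat -> binary (s i)) ->
     (forall x, 0 <= x <= tent lam (1/2) ->
        exists i, (i < N)%nat /\ itin lam x i <> s i) ->
     exists a j, (1 <= j <= m)%nat /\ (a + j <= N)%nat /\
       word_succ j (fun i => s (a + i)%nat) K)
  /\
  (* (2) *)
  (forall (t : nat -> Omega),
     (forall i, binary (t i)) ->
     (exists k, seq_succ (shiftk k t) K) ->
     exists a j, (1 <= j <= m)%nat /\
       word_succ j (fun i => t (a + i)%nat) K).
Proof.
  intros Hlam Hcp _ HK.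
  assert (Hl : 0 < lam) by lra.
  assert (Hper := kneading_even_periodic lam m K Hl Hcp HK).
  split.
  - intros N s Hbin Hnot.
    assert (Hnot' : forall x, 0 <= x <= lam / 2 -> ~ agree N (itin lam x) s).
    { intros x Hx Hag. rewrite <- tent_c in Hx.
      destruct (Hnot x Hx) as [i [Hi Hne]]. exact (Hne (Hag i Hi)). }
    destruct (nonadmissible_excess lam K N s Hl HK Hbin Hnot') as [a [d [Had Hgt]]].
    destruct (short_excess m K s a d Hper Hgt) as [a' [j [Hj [Hend Hw]]]].
    exists a', j. split; [exact Hj|split; [lia|exact Hw]].
  - intros t _ [k [d Hgt]].
    destruct (short_excess m K t k d Hper Hgt) as [a' [j [Hj [_ Hw]]]].
    exists a', j. split; [exact Hj|exact Hw].
Qed.
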